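(* Let $\boldsymbol{A}\in\mathsf{PSL}$ be finite. Then $\boldsymbol{A}^+$ is the $\langle\land,\lnot,0,1\rangle$-reduct of a Heyting algebra, $\boldsymbol{A}^+\in\mathsf{PSL}$, and the map $\epsilon_{\boldsymbol{A}}\colon\boldsymbol{A}\to\boldsymbol{A}^+$ is an embedding.
   Context: $\mathsf{PSL}$ is the class of pseudocomplemented semilattices $\langle A;\land,\lnot,0,1\rangle$: $\langle A;\land\rangle$ is a semilattice (order $a\le b$ iff $a\land b=a$) with minimum $0$ and maximum $1$, and $c\land a=0\iff c\le\lnot a$. An element $a$ of a semilattice is join irreducible if it is not the minimum and, whenever $a=b\lor c$ for some $b,c$ whose join exists, $a=b$ or $a=c$; $\mathsf{J}(\boldsymbol{A})$ is the subposet of join irreducible elements. For finite $\boldsymbol{A}$, $\boldsymbol{A}^+=\langle\mathsf{Dw}(\mathsf{J}(\boldsymbol{A}));\cap,\lnot,\emptyset,\mathsf{J}(\boldsymbol{A})\rangle$, where $\mathsf{Dw}(\mathsf{J}(\boldsymbol{A}))$ is the set of downsets of $\mathsf{J}(\boldsymbol{A})$ and $\lnot D=\{a\in\mathsf{J}(\boldsymbol{A}): D\cap{\downarrow}a=\emptyset\}$; and $\epsilon_{\boldsymbol{A}}(a)=\mathsf{J}(\boldsymbol{A})\cap{\downarrow}a$. *)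

From mathcomp Require Import all_boot.
Set Implicit Arguments. Unset Strict Implicit. Unset Printing Implicit Defensive.

Definition le_of (X : Type) (meet : X -> X -> X) (a b : X) : Prop := meet a b = a.

Definition is_psl_on (X : Type) (P : X -> Prop)
  (meet : X -> X -> X) (neg : X -> X) (zero one : X) : Prop :=
  [/\ P zero /\ P one,
      (forall a b, P a -> P b -> P (meet a b)) /\ (forall a, P a -> P (neg a)),
      (forall a b c, P a -> P b -> P c -> meet a (meet b c) = meet (meet a b) c)
      /\ (forall a b, P a -> P b -> meet a b = meet b a)
      /\ (forall a, P a -> meet a a = a),
      (forall a, P a -> le_of meet zero a /\ le_of meet a one) &
      (forall a c, P a -> P c -> (meet c a = zero <-> le_of meet c (neg a)))].

Definition is_heyting_on (X : Type) (P : X -> Prop)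
  (meet join imp : X -> X -> X) (bot top : X) : Prop :=
  [/\ P bot /\ P top,
      (forall a b, P a -> P b -> [/\ P (meet a b), P (join a b) & P (imp a b)]),
      (forall a b c, P a -> P b -> P c ->
          meet a (meet b c) = meet (meet a b) c /\ join a (join b c) = join (join a b) c)
      /\ (forall a b, P a -> P b -> meet a b = meet b a /\ join a b = join b a)
      /\ (forall a b, P a -> P b -> meet a (join a b) = a /\ join a (meet a b) = a),
      (forall a, P a -> meet bot a = bot /\ meet a top = a) &
      (forall a b c, P a -> P b -> P c ->
          (le_of meet (meet a b) c <-> le_of meet a (imp b c)))].

Section Plus.
Variables (T : finType) (meet : T -> T -> T) (zero : T).

Definition leb (a b : T) : bool := meet a b == a.

Definition is_joinb (x b c : T) : bool :=
  [&& leb b x, leb c x & [forall u, leb b u ==> leb c u ==> leb x u]].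

Definition join_irrb (a : T) : bool :=
  (a != zero) &&
  [forall b, forall c, is_joinb a b c ==> (a == b) || (a == c)].

Definition Jirr : {set T} := [set a | join_irrb a].

Definition downset (D : {set T}) : bool :=
  (D \subset Jirr) &&
  [forall a in D, forall b in Jirr, leb b a ==> (b \in D)].

Definition plus_neg (D : {set T}) : {set T} :=
  [set a in Jirr | [forall b in D, ~~ leb b a]].

Definition eps (a : T) : {set T} := [set b in Jirr | leb b a].

End Plus.

From mathcomp Require Import all_boot.

(* In a finite meet-semilattice with 0 every element is the join of the join
   irreducibles below it: if x is not below y, descending along join
   decompositions of x (the principal downsets shrink) reaches a join
   irreducible c <= x with c not below y.  Hence epsilon is an order embedding
   that preserves meets.  The downsets of J(A) form a Heyting algebra under
   intersection and union, with D -> E the set of c in J(A) whose principal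
   downset meets D inside E; the pseudocomplement of A^+ is D -> 0, and the
   pseudocomplement of A is preserved because c <= neg a iff c /\ a = 0 iff
   epsilon(c) /\ epsilon(a) = 0. *)

Section PlusAlgebra.

Variables (T : finType) (meet : T -> T -> T) (zero : T).
Hypotheses (meetA : associative meet) (meetC : commutative meet)
  (meetxx : idempotent_op meet) (meet0x : left_zero zero meet).
Implicit Types (C D E F : {set T}).

Local Notation leb := (leb meet).
Local Notation J := (Jirr meet zero).
Local Notation downset := (downset meet zero).
Local Notation plus_neg := (plus_neg meet zero).
Local Notation eps := (eps meet zero).

Lemma leb_refl a : leb a a.
Proof. by rewrite /leb meetxx. Qed.

Lemma leb_trans {a b c} : leb a b -> leb b c -> leb a c.
Proof. by rewrite /leb => /eqP ab /eqP bc; apply/eqP; rewrite -{1}ab -meetA bc ab. Qed.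

Lemma leb_anti {a b} : leb a b -> leb b a -> a = b.
Proof. by rewrite /leb => /eqP ab /eqP ba; rewrite -ab meetC ba. Qed.

Lemma leb_meet c a b : leb c (meet a b) = leb c a && leb c b.
Proof.
rewrite /leb; apply/eqP/andP => [cab | [/eqP ca /eqP cb]]; last by rewrite meetA ca cb.
split; apply/eqP; rewrite -cab -meetA; last by rewrite -meetA meetxx.
by rewrite [meet a b]meetC -meetA meetxx.
Qed.

Lemma leb0x a : leb zero a.
Proof. by rewrite /leb meet0x. Qed.

Lemma lebx0 a : leb a zero -> a = zero.
Proof. by move/leb_anti; apply; apply: leb0x. Qed.

Lemma Jirr_neq0 c : c \in J -> c != zero.
Proof. by rewrite inE => /andP[]. Qed.

Lemma not_Jirr {x} : x != zero -> x \notin J ->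
  exists b c, [/\ is_joinb meet x b c, x != b & x != c].
Proof.
move=> x0; rewrite inE /join_irrb x0 negb_forall => /existsP[b].
rewrite negb_forall => /existsP[c]; rewrite negb_imply negb_or => /andP[xbc /andP[xb xc]].
by exists b, c.
Qed.

Lemma card_down_lt {d x} : leb d x -> d != x ->
  #|[set z | leb z d]| < #|[set z | leb z x]|.
Proof.
move=> dx dNx; apply/proper_card/properP; split.
  by apply/subsetP => z; rewrite !inE => /leb_trans; apply.
exists x; rewrite !inE ?leb_refl //; apply: contra dNx => xd.
by rewrite (leb_anti dx xd).
Qed.

Lemma Jirr_separates x y : ~~ leb x y ->
  exists2 c, c \in J & leb c x && ~~ leb c y.
Proof.
have [n] := ubnP #|[set z | leb z x]|; elim: n x => // n IH x; rewrite ltnS => xn xNy.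
have [xJ | xNJ] := boolP (x \in J); first by exists x; rewrite ?leb_refl.
have x0 : x != zero by apply: contra xNy => /eqP->; apply: leb0x.
have [b [c [/and3P[bx cx /forallP xleast] xb xc]]] := not_Jirr x0 xNJ.
have descend d : leb d x -> x != d -> ~~ leb d y ->
    exists2 c, c \in J & leb c x && ~~ leb c y.
  move=> dx xd /(IH d (leq_trans (card_down_lt dx _) xn))[|e eJ /andP[ed eNy]].
    by rewrite eq_sym.
  by exists e; rewrite ?eNy ?(leb_trans ed dx).
have [by_ | bNy] := boolP (leb b y); last exact: descend bx xb bNy.
have [cy | cNy] := boolP (leb c y); last exact: descend cx xc cNy.
by move: (xleast y); rewrite by_ cy (negbTE xNy).
Qed.

Lemma mem_eps a c : (c \in eps a) = (c \in J) && leb c a.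
Proof. exact: in_set. Qed.

Lemma eps_subset a b : (eps a \subset eps b) = leb a b.
Proof.
apply/subsetP/idP => [epsab | ab c]; last first.
  by rewrite !mem_eps => /andP[-> /leb_trans]; apply.
apply/negPn/negP => /Jirr_separates[c cJ /andP[ca cNb]].
by have := epsab c; rewrite !mem_eps cJ ca (negbTE cNb) => /(_ isT).
Qed.

Lemma eps_inj : injective eps.
Proof. by move=> a b ab; apply: leb_anti; rewrite -eps_subset ab. Qed.

Lemma eps_meet a b : eps (meet a b) = eps a :&: eps b.
Proof. by apply/setP => c; rewrite in_setI !mem_eps leb_meet andbACA andbb. Qed.

Lemma eps0 : eps zero = set0.
Proof.
apply/setP => c; rewrite mem_eps in_set0; apply/andP => -[/Jirr_neq0 cN0 /lebx0 c0].
by rewrite c0 eqxx in cN0.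
Qed.

Lemma downsetP D :
  reflect (D \subset J /\ forall a b, a \in D -> b \in J -> leb b a -> b \in D)
          (downset D).
Proof.
apply: (iffP andP) => -[DJ closed]; split => //.
  move=> a b aD bJ; move/forall_inP/(_ a aD)/forall_inP/(_ b bJ): closed.
  exact/implyP.
by apply/forall_inP => a aD; apply/forall_inP => b bJ; apply/implyP; apply: closed.
Qed.

Lemma downset_sub {D} : downset D -> D \subset J.
Proof. by case/downsetP. Qed.

Lemma downset_Jirr : downset J.
Proof. by apply/downsetP. Qed.

Lemma downset0 : downset set0.
Proof. by apply/downsetP; split=> [|a b]; rewrite ?sub0set ?inE. Qed.

Lemma downsetI D E : downset D -> downset E -> downset (D :&: E).
Proof.
move=> /downsetP[DJ Dc] /downsetP[_ Ec]; apply/downsetP; split.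
  exact: subset_trans (subsetIl D E) DJ.
by move=> a b; rewrite !in_setI => /andP[aD aE] bJ ba; rewrite (Dc a b) // (Ec a b).
Qed.

Lemma downsetU D E : downset D -> downset E -> downset (D :|: E).
Proof.
move=> /downsetP[DJ Dc] /downsetP[EJ Ec]; apply/downsetP; split.
  by rewrite subUset DJ EJ.
move=> a b; rewrite !in_setU => /orP[aD | aE] bJ ba; first by rewrite (Dc a b).
by rewrite (Ec a b) ?orbT.
Qed.

Lemma downset_eps a : downset (eps a).
Proof.
apply/downsetP; split; first by apply/subsetP => c; rewrite mem_eps => /andP[].
by move=> c b; rewrite !mem_eps => /andP[_ ca] -> /leb_trans; apply.
Qed.

Lemma eps_sub_downset D c : downset D -> c \in J -> (eps c \subset D) = (c \in D).
Proof.
move=> /downsetP[_ Dc] cJ; apply/subsetP/idP => [epsc | cD b].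
  by apply: epsc; rewrite mem_eps cJ leb_refl.
by rewrite mem_eps => /andP[bJ bc]; apply: Dc bc.
Qed.

Definition plus_imp (D E : {set T}) : {set T} :=
  [set a in J | [forall b in J, leb b a ==> (b \in D) ==> (b \in E)]].

Lemma mem_plus_imp D E a :
  (a \in plus_imp D E) = (a \in J) && [forall b in J, leb b a ==> (b \in D) ==> (b \in E)].
Proof. exact: in_set. Qed.

Lemma mem_plus_neg D a : (a \in plus_neg D) = (a \in J) && [forall b in D, ~~ leb b a].
Proof. exact: in_set. Qed.

Lemma downset_imp D E : downset (plus_imp D E).
Proof.
apply/downsetP; split; first by apply/subsetP => a; rewrite mem_plus_imp => /andP[].
move=> a b; rewrite !mem_plus_imp => /andP[_ /forall_inP aDE] -> ba /=.
by apply/forall_inP => c cJ; apply/implyP => cb; have := aDE c cJ; rewrite (leb_trans cb ba).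
Qed.

Lemma subset_imp D E F : downset D -> (D :&: E \subset F) = (D \subset plus_imp E F).
Proof.
move=> /downsetP[DJ Dc]; apply/subsetP/subsetP => [DEF a aD | DimpEF a].
  rewrite mem_plus_imp (subsetP DJ a aD); apply/forall_inP => b bJ; apply/implyP => ba.
  by apply/implyP => bE; apply: DEF; rewrite in_setI bE (Dc a).
rewrite in_setI => /andP[/DimpEF]; rewrite mem_plus_imp => /andP[aJ /forall_inP/(_ a aJ)].
by rewrite leb_refl /= => /implyP.
Qed.

Lemma plus_neg_imp D : D \subset J -> plus_neg D = plus_imp D set0.
Proof.
move=> DJ; apply/setP => a; rewrite mem_plus_neg mem_plus_imp; apply: andb_id2l => _.
apply/forall_inP/forall_inP => [DNa b _ | DimpN b bD].
  by apply/implyP => ba; apply/implyP => /DNa; rewrite ba.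
by apply/negP => ba; have := DimpN b (subsetP DJ b bD); rewrite ba bD in_set0.
Qed.

Lemma plus_neg_pseudocompl C D : downset C -> D \subset J ->
  (C :&: D == set0) = (C \subset plus_neg D).
Proof. by move=> Cdown DJ; rewrite plus_neg_imp // -subset_imp // subset0. Qed.

Lemma downset_neg {D} : D \subset J -> downset (plus_neg D).
Proof. by move=> DJ; rewrite plus_neg_imp //; apply: downset_imp. Qed.

Lemma plus_heyting :
  is_heyting_on downset (@setI T) (@setU T) plus_imp set0 J.
Proof.
split.
- by split; [apply: downset0 | apply: downset_Jirr].
- by move=> D E Dd Ed; split; [apply: downsetI | apply: downsetU | apply: downset_imp].
- split; first by move=> D E F *; rewrite setIA setUA.
  split; first by move=> D E *; rewrite setIC setUC.
  by move=> D E *; rewrite setIC setUK setIC setKI.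
- by move=> D /downset_sub DJ; rewrite set0I; split => //; apply/setIidPl.
move=> D E F Dd _ _; rewrite /le_of; apply: iff_trans (rwP setIidPl) _.
by rewrite subset_imp //; apply: iff_sym (rwP setIidPl).
Qed.

Lemma plus_psl : is_psl_on downset (@setI T) plus_neg set0 J.
Proof.
split.
- by split; [apply: downset0 | apply: downset_Jirr].
- by split=> [D E | D /downset_sub]; [apply: downsetI | apply: downset_neg].
- split; first by move=> D E F *; rewrite setIA.
  by split=> [D E _ _ | D _]; [apply: setIC | apply: setIid].
- by move=> D /downset_sub DJ; split; [apply: set0I | apply/setIidPl].
move=> D C /downset_sub DJ Cd; rewrite /le_of; apply: iff_trans (rwP eqP) _.
by rewrite plus_neg_pseudocompl //; apply: iff_sym (rwP setIidPl).
Qed.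

Lemma eps_neg (neg : T -> T) :
  (forall a c, meet c a = zero <-> le_of meet c (neg a)) ->
  forall a, eps (neg a) = plus_neg (eps a).
Proof.
move=> pseudocompl a.
have epsaJ := downset_sub (downset_eps a).
have negJ := downset_sub (downset_neg epsaJ).
apply/setP => c; rewrite mem_eps.
have [cJ | cNJ] /= := boolP (c \in J); last first.
  by apply/esym/negbTE; apply: contra cNJ; apply: (subsetP negJ).
rewrite -eps_sub_downset ?downset_neg // -plus_neg_pseudocompl ?downset_eps //.
rewrite -eps_meet -eps0 (inj_eq eps_inj).
by apply/eqP/eqP => [/(pseudocompl a c).2 | /(pseudocompl a c).1].
Qed.

Lemma eps1 one : (forall a, meet a one = a) -> eps one = J.
Proof. by move=> meetx1; apply/setP => c; rewrite mem_eps /leb meetx1 eqxx andbT. Qed.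

End PlusAlgebra.

Theorem lemma5p8 (T : finType) (meet : T -> T -> T) (neg : T -> T) (zero one : T) :
  is_psl_on (fun _ : T => True) meet neg zero one ->
  (* A^+ is the <meet, neg, 0, 1>-reduct of a Heyting algebra *)
  (exists (join imp : {set T} -> {set T} -> {set T}),
      is_heyting_on (fun D => downset meet zero D) (@setI T) join imp set0 (Jirr meet zero)
      /\ (forall D, downset meet zero D -> plus_neg meet zero D = imp D set0))
  (* A^+ is in PSL *)
  /\ is_psl_on (fun D => downset meet zero D) (@setI T) (plus_neg meet zero) set0 (Jirr meet zero)
  (* epsilon_A : A -> A^+ is an embedding *)
  /\ [/\ (forall a, downset meet zero (eps meet zero a)) /\ injective (eps meet zero),
         (forall a b, eps meet zero (meet a b) = eps meet zero a :&: eps meet zero b),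
         (forall a, eps meet zero (neg a) = plus_neg meet zero (eps meet zero a)),
         eps meet zero zero = set0 &
         eps meet zero one = Jirr meet zero].
Proof.
move=> [_ _ [mA [mC mI]] bounds pc].
have meetA : associative meet by move=> a b c; apply: mA.
have meetC : commutative meet by move=> a b; apply: mC.
have meetxx : idempotent_op meet by move=> a; apply: mI.
have meet0x : left_zero zero meet by move=> a; case: (bounds a).
have meetx1 a : meet a one = a by case: (bounds a).
split.
  exists (@setU T), (@plus_imp T meet zero); split; first exact: plus_heyting.
  by move=> D /downset_sub; apply: plus_neg_imp.
split; first exact: plus_psl.
split.
- by split; [apply: downset_eps | apply: eps_inj].
- exact: eps_meet.
- by apply: eps_neg => // a c; apply: pc.
- exact: eps0.
exact: eps1.
Qed.
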